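(* Let $\mathcal{X}\subseteq\mathcal{B}(0,R)$ be compact convex, $\mathcal{Z}$ a set and $f:\mathcal{X}\times\mathcal{Z}\to\mathbb{R}$ with $f(\cdot,z)\in\mathcal{F}^0_{\mathcal{X}}(L)$ for all $z$. Suppose $T\le n$. For sampling-with-replacement SGD $\mathcal{A}_{\sf rSGD}$ with step sizes $(\eta_t)_{t\in[T]}$ and any neighboring datasets $S\simeq S'$, $$\mathbb{E}\big[\|\mathcal{A}_{\sf rSGD}(S)-\mathcal{A}_{\sf rSGD}(S')\|\big]\le\min\Big(2R,\;3L\frac{T-1}{n}\Big(\sqrt{\sum_{t=1}^{T-1}\eta_t^2}+\frac1n\sum_{t=1}^{T-1}\eta_t\Big)\Big).$$
   Context: $\mathcal{F}^0_{\mathcal{X}}(L)$ is the class of convex $L$-Lipschitz functions on $\mathcal{X}$ (Lipschitz on an open set containing $\mathcal{X}$, so subgradients have norm at most $L$). $\mathcal{A}_{\sf rSGD}$ on $S=(z_1,\dots,z_n)$: from a fixed initial point $x^1\in\mathcal{X}$, for $t=1,\dots,T-1$ draw $\mathbf{i}_t\sim\mathrm{Unif}([n])$ independently and set $x^{t+1}=\mathsf{Proj}_{\mathcal{X}}(x^t-\eta_t\nabla f(x^t,z_{\mathbf{i}_t}))$, where $\nabla f(x,z)$ is a fixed selection of a subgradient; output $\frac{1}{\sum_t\eta_t}\sum_{t\in[T]}\eta_tx^t$. The runs on $S$ and $S'$ use the same initial point and the same indices; the expectation is over the indices. $S\simeq S'$ means the datasets differ in at most one entry. *)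

From HB Require Import structures.
From mathcomp Require Import all_boot all_order all_algebra.
From mathcomp Require Import all_classical all_reals all_analysis.
Set Implicit Arguments. Unset Strict Implicit. Unset Printing Implicit Defensive.
Import Order.TTheory GRing.Theory Num.Theory.
Import numFieldNormedType.Exports.
Local Open Scope ring_scope.
Local Open Scope classical_set_scope.

Section Defs.
Variables (R : realType) (d : nat).
Notation vec := 'rV[R]_d.

Definition dotp (u v : vec) : R := \sum_(i < d) u ord0 i * v ord0 i.
Definition enorm (v : vec) : R := Num.sqrt (\sum_(i < d) v ord0 i ^+ 2).

Definition convex_on (X : set vec) (h : vec -> R) : Prop :=
  forall x y a, X x -> X y -> 0 <= a <= 1 ->
    h (a *: x + (1 - a) *: y) <= a * h x + (1 - a) * h y.

Definition lipschitz_on (U : set vec) (L : R) (h : vec -> R) : Prop :=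
  forall x y, U x -> U y -> `|h x - h y| <= L * enorm (x - y).

(* h belongs to F^0_X(L): convex on X, L-Lipschitz on an open set containing X. *)
Definition convex_lip_class (X : set vec) (L : R) (h : vec -> R) : Prop :=
  convex_on X h /\ exists U : set vec, [/\ open U, X `<=` U & lipschitz_on U L h].

Definition is_subgrad (X : set vec) (L : R) (h : vec -> R) (x gx : vec) : Prop :=
  (forall y, X y -> h x + dotp gx (y - x) <= h y) /\ enorm gx <= L.

Definition is_proj (X : set vec) (p : vec -> vec) : Prop :=
  forall v, X (p v) /\ forall y, X y -> enorm (v - p v) <= enorm (v - y).

(* Iterates of rSGD: rsgd_x k is x^{k+1} in the paper's 1-based notation.
   Step k (0-based, k < m = T-1) uses eta (k+1) and sample S (I k). *)
Fixpoint rsgd_x (Z : Type) (n m : nat) (proj : vec -> vec) (g : Z -> vec -> vec)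
    (S : 'I_n -> Z) (eta : nat -> R) (x1 : vec) (I : {ffun 'I_m -> 'I_n}) (k : nat)
    : vec :=
  match k with
  | 0 => x1
  | k'.+1 =>
      let x := rsgd_x proj g S eta x1 I k' in
      match (insub k' : option 'I_m) with
      | Some j => proj (x - eta k *: g (S (I j)) x)
      | None => x
      end
  end.

Definition rsgd_out (Z : Type) (n T : nat) (proj : vec -> vec) (g : Z -> vec -> vec)
    (S : 'I_n -> Z) (eta : nat -> R) (x1 : vec) (I : {ffun 'I_T.-1 -> 'I_n}) : vec :=
  (\sum_(k < T) eta k.+1)^-1 *: \sum_(k < T) eta k.+1 *: rsgd_x proj g S eta x1 I k.

(* Expectation over i.i.d. uniform indices i_1..i_{T-1} in [n]. *)
Definition expect_idx (n m : nat) (F : {ffun 'I_m -> 'I_n} -> R) : R :=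
  (\sum_(I : {ffun 'I_m -> 'I_n}) F I) / (n%:R ^+ m).

End Defs.

Definition neighboring (Z : Type) (n : nat) (S S' : 'I_n -> Z) : Prop :=
  exists j : 'I_n, forall i, i != j -> S i = S' i.

(* Let [b_s] record whether step [s] samples the index at which [S] and [S'] differ, and
   let [N_k] count these steps before [k]. Subgradients are monotone and bounded by [L] and the
   projection is nonexpansive, so a step on a common sample increases the squared distance of
   the two trajectories by at most [(2 L eta)^2], a step on a differing sample increases the
   distance by at most [2 L eta], and the trajectories coincide up to the first differing step.
   By induction
     [|x_k - x'_k| <= 2 L (sqrt (sum_(s<k) eta_(s+1)^2) N_k + sum_(s<k) b_s N_s eta_(s+1))],
   and so is the distance of the weighted averages. For i.i.d. uniform indices [E N_m = m/n] and
   [E (b_s N_s) = s/n^2], which gives the second bound (even with 2 in place of 3); the first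
   holds because both outputs are averages of points of [X]. *)

From HB Require Import structures.
From mathcomp Require Import all_boot all_order all_algebra.
From mathcomp Require Import all_classical all_reals all_analysis.
From mathcomp Require Import ring lra.
Import Order.TTheory GRing.Theory Num.Theory.
Import numFieldNormedType.Exports.
Local Open Scope ring_scope.
Local Open Scope classical_set_scope.
Set Implicit Arguments. Unset Strict Implicit. Unset Printing Implicit Defensive.

Section Euclidean.
Variables (R : realType) (d : nat).
Implicit Types u v w : 'rV[R]_d.

Lemma dotpC u v : dotp u v = dotp v u.
Proof. by apply: eq_bigr => i _; rewrite mulrC. Qed.

Lemma dotpDl u v w : dotp (u + v) w = dotp u w + dotp v w.
Proof. by rewrite /dotp -big_split; apply: eq_bigr => i _; rewrite !mxE mulrDl. Qed.

Lemma dotpZl (a : R) u v : dotp (a *: u) v = a * dotp u v.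
Proof. by rewrite /dotp mulr_sumr; apply: eq_bigr => i _; rewrite !mxE mulrA. Qed.

Lemma dotpNl u v : dotp (- u) v = - dotp u v.
Proof. by rewrite -scaleN1r dotpZl mulN1r. Qed.

Lemma dotpBl u v w : dotp (u - v) w = dotp u w - dotp v w.
Proof. by rewrite dotpDl dotpNl. Qed.

Lemma dotpZr (a : R) u v : dotp u (a *: v) = a * dotp u v.
Proof. by rewrite dotpC dotpZl dotpC. Qed.

Lemma dotpBr u v w : dotp u (v - w) = dotp u v - dotp u w.
Proof. by rewrite dotpC dotpBl !(dotpC u). Qed.

Lemma dotpp_ge0 v : 0 <= dotp v v.
Proof. by apply: sumr_ge0 => i _; rewrite -expr2 sqr_ge0. Qed.

Lemma dotpp_eq0 v w : dotp v v = 0 -> dotp v w = 0.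
Proof.
move=> /psumr_eq0P v0; rewrite /dotp big1 // => i _.
have /eqP : v ord0 i * v ord0 i = 0 by apply: v0 => // k _; rewrite -expr2 sqr_ge0.
by rewrite mulf_eq0 orbb => /eqP ->; rewrite mul0r.
Qed.

Lemma enormE v : enorm v = Num.sqrt (dotp v v).
Proof. by congr Num.sqrt; apply: eq_bigr => i _; rewrite expr2. Qed.

Lemma enorm_ge0 v : 0 <= enorm v.
Proof. exact: sqrtr_ge0. Qed.

Lemma enorm_sqr v : enorm v ^+ 2 = dotp v v.
Proof. by rewrite enormE sqr_sqrtr // dotpp_ge0. Qed.

Lemma dotp_subZ (a : R) u v :
  dotp (u - a *: v) (u - a *: v) = dotp u u - 2 * a * dotp u v + a ^+ 2 * dotp v v.
Proof. by rewrite !dotpBl !dotpBr !dotpZl !dotpZr (dotpC v u); ring. Qed.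

Lemma dotp_sqr_le u v : dotp u v ^+ 2 <= dotp u u * dotp v v.
Proof.
have [v0|v_neq0] := eqVneq (dotp v v) 0.
  by rewrite dotpC (dotpp_eq0 _ v0) v0 expr0n mulr0.
have v_gt0 : 0 < dotp v v by rewrite lt_def v_neq0 dotpp_ge0.
(* expand [0 <= |u - t v|^2] at the minimising [t] *)
have := dotpp_ge0 (u - (dotp u v / dotp v v) *: v).
rewrite dotp_subZ.
suff -> : dotp u u - 2 * (dotp u v / dotp v v) * dotp u v +
    (dotp u v / dotp v v) ^+ 2 * dotp v v =
    (dotp u u * dotp v v - dotp u v ^+ 2) / dotp v v.
  by rewrite pmulr_lge0 ?invr_gt0 // subr_ge0.
by field.
Qed.

Lemma cauchy_schwarz u v : dotp u v <= enorm u * enorm v.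
Proof.
apply: le_trans (ler_norm _) _.
rewrite -sqrtr_sqr !enormE -sqrtrM ?dotpp_ge0 //.
by rewrite ler_sqrt ?mulr_ge0 ?dotpp_ge0 // dotp_sqr_le.
Qed.

Lemma enormD u v : enorm (u + v) <= enorm u + enorm v.
Proof.
rewrite -(ler_pXn2r (n := 2)) ?nnegrE ?addr_ge0 ?enorm_ge0 //.
rewrite enorm_sqr dotpDl !(dotpC _ (u + v)) !dotpDl sqrrD !enorm_sqr (dotpC v u).
by have := cauchy_schwarz u v; lra.
Qed.

Lemma enormZ (a : R) v : enorm (a *: v) = `|a| * enorm v.
Proof. by rewrite !enormE dotpZl dotpZr mulrA -expr2 sqrtrM ?sqr_ge0 // sqrtr_sqr. Qed.

Lemma enormN v : enorm (- v) = enorm v.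
Proof. by rewrite -scaleN1r enormZ normrN1 mul1r. Qed.

Lemma enorm0 : enorm (0 : 'rV[R]_d) = 0.
Proof. by rewrite -(scale0r 0) enormZ normr0 mul0r. Qed.

Lemma enormB u v : enorm (u - v) <= enorm u + enorm v.
Proof. by rewrite -(enormN v) enormD. Qed.

Lemma enorm_sum (I : finType) (F : I -> 'rV[R]_d) :
  enorm (\sum_i F i) <= \sum_i enorm (F i).
Proof.
elim/big_ind2: _ => [|u a v b ua vb|]; rewrite ?enorm0 //.
exact: le_trans (enormD _ _) (lerD ua vb).
Qed.

Lemma enorm_avg_le (T : nat) (w : 'I_T -> R) (y : 'I_T -> 'rV[R]_d) (b : R) :
  (forall k, 0 <= w k) -> (forall k, enorm (y k) <= b) -> 0 <= b ->
  enorm ((\sum_k w k)^-1 *: \sum_k w k *: y k) <= b.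
Proof.
move=> w_ge0 yb b_ge0; have W_ge0 : 0 <= \sum_k w k by exact: sumr_ge0.
rewrite enormZ ger0_norm ?invr_ge0 //.
have [->|W_neq0] := eqVneq (\sum_k w k) 0; first by rewrite invr0 mul0r.
rewrite ler_pdivrMl ?lt_def ?W_neq0 // mulr_suml.
apply: le_trans (enorm_sum _) (ler_sum _ _) => k _.
by rewrite enormZ ger0_norm // ler_wpM2l.
Qed.

End Euclidean.

Section Projection.
Variables (R : realType) (d : nat) (X : set 'rV[R]_d) (proj : 'rV[R]_d -> 'rV[R]_d).
Hypotheses (X_convex : convex_set X) (projP : is_proj X proj).

Lemma convex_set_combine (y p : 'rV[R]_d) (s : R) :
  X y -> X p -> 0 <= s -> s <= 1 -> X (s *: y + (1 - s) *: p).
Proof.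
move=> Xy Xp s_ge0 s_le1.
by have := X_convex (Itv01 s_ge0 s_le1) (mem_set Xy) (mem_set Xp); rewrite inE.
Qed.

Lemma proj_obtuse v y : X y -> dotp (v - proj v) (y - proj v) <= 0.
Proof.
move=> Xy; have [Xp p_min] := projP v; set p := proj v in Xp p_min *.
set c := dotp (v - p) (y - p); set q := dotp (y - p) (y - p).
have q_ge0 : 0 <= q by exact: dotpp_ge0.
(* moving from [p] towards [y] by [s] must not get closer to [v] *)
have c_le s : 0 < s -> s <= 1 -> 2 * c <= s * q.
  move=> s_gt0 s_le1; have := p_min _ (convex_set_combine Xy Xp (ltW s_gt0) s_le1).
  have -> : v - (s *: y + (1 - s) *: p) = (v - p) - s *: (y - p).
    by apply/rowP => i; rewrite !mxE; ring.
  rewrite !enormE ler_sqrt ?dotpp_ge0 // dotp_subZ -/c -/q => h.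
  by rewrite -(ler_pM2l s_gt0) mulrA [s * 2]mulrC; nra.
(* for [s = c / (c + q)] this would give [2 c <= c q / (c + q) < c] *)
rewrite leNgt; apply/negP => c_gt0.
have cq_gt0 : 0 < c + q by lra.
have := c_le (c / (c + q)); rewrite divr_gt0 // ler_pdivrMr // mul1r.
rewrite lerDl q_ge0 mulrAC ler_pdivlMr // => /(_ isT isT); nra.
Qed.

Lemma proj_nonexpansive u v : enorm (proj u - proj v) <= enorm (u - v).
Proof.
have obtuse_u := proj_obtuse u (proj1 (projP v)).
have obtuse_v := proj_obtuse v (proj1 (projP u)).
set p := proj u in obtuse_u obtuse_v *; set q := proj v in obtuse_u obtuse_v *.
have pq_le : enorm (p - q) ^+ 2 <= dotp (u - v) (p - q).
  move: obtuse_u obtuse_v; rewrite enorm_sqr !dotpBl !dotpBr.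
  by rewrite !(dotpC q p); lra.
have := cauchy_schwarz (u - v) (p - q).
have := enorm_ge0 (p - q); have := enorm_ge0 (u - v); nra.
Qed.

End Projection.

Section GradientStep.
Variables (R : realType) (d : nat) (L : R).
Implicit Types u v gu gv : 'rV[R]_d.

Lemma subgrad_monotone (X : set 'rV[R]_d) (h : 'rV[R]_d -> R) u v gu gv :
  X u -> X v -> is_subgrad X L h u gu -> is_subgrad X L h v gv ->
  0 <= dotp (gu - gv) (u - v).
Proof.
move=> Xu Xv [hu _] [hv _]; have := hu v Xv; have := hv u Xu.
rewrite dotpBl !dotpBr; lra.
Qed.

Lemma enormB_le gu gv : enorm gu <= L -> enorm gv <= L -> enorm (gu - gv) <= 2 * L.
Proof. by move=> gu_le gv_le; apply: le_trans (enormB _ _) _; lra. Qed.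

Lemma enorm_step_same u v gu gv (e : R) :
  0 <= dotp (gu - gv) (u - v) -> enorm gu <= L -> enorm gv <= L -> 0 <= e ->
  enorm ((u - e *: gu) - (v - e *: gv)) ^+ 2 <= enorm (u - v) ^+ 2 + (2 * L * e) ^+ 2.
Proof.
move=> mono gu_le gv_le e_ge0; have G_le := enormB_le gu_le gv_le.
have -> : (u - e *: gu) - (v - e *: gv) = (u - v) - e *: (gu - gv).
  by apply/rowP => i; rewrite !mxE; ring.
have G2_le : dotp (gu - gv) (gu - gv) <= (2 * L) ^+ 2.
  have G_ge0 := enorm_ge0 (gu - gv).
  by rewrite -enorm_sqr ler_pXn2r ?nnegrE //; lra.
have := ler_wpM2l (sqr_ge0 e) G2_le; have := mulr_ge0 e_ge0 mono.
by rewrite !enorm_sqr dotp_subZ (dotpC (u - v)) [(2 * L * e) ^+ 2]exprMn mulrC; lra.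
Qed.

Lemma enorm_step_diff u v gu gv (e : R) : enorm gu <= L -> enorm gv <= L -> 0 <= e ->
  enorm ((u - e *: gu) - (v - e *: gv)) <= enorm (u - v) + 2 * L * e.
Proof.
move=> gu_le gv_le e_ge0; have G_le := enormB_le gu_le gv_le.
have -> : (u - e *: gu) - (v - e *: gv) = (u - v) - e *: (gu - gv).
  by apply/rowP => i; rewrite !mxE; ring.
apply: le_trans (enormB _ _) _; rewrite enormZ ger0_norm // lerD2l.
by rewrite mulrC ler_wpM2r.
Qed.

End GradientStep.

Definition nhits (b : nat -> bool) (k : nat) : nat := \sum_(0 <= s < k) b s.

Definition stab_bound (R : realType) (eta : nat -> R) (b : nat -> bool) (k : nat) : R :=
  Num.sqrt (\sum_(0 <= s < k) eta s.+1 ^+ 2) * (nhits b k)%:R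
  + \sum_(0 <= s < k) (b s : nat)%:R * (nhits b s)%:R * eta s.+1.

Section StabBound.
Variables (R : realType) (eta : nat -> R) (b : nat -> bool) (m : nat).
Hypothesis eta_ge0 : forall k, (k < m)%N -> 0 <= eta k.+1.
Local Notation bnd := (stab_bound eta b).

Lemma nhitsS k : nhits b k.+1 = (nhits b k + b k)%N.
Proof. by rewrite /nhits big_nat_recr. Qed.

Lemma stab_boundS k : bnd k.+1 =
  Num.sqrt (\sum_(0 <= s < k) eta s.+1 ^+ 2 + eta k.+1 ^+ 2) * (nhits b k + b k)%:R
  + (\sum_(0 <= s < k) (b s : nat)%:R * (nhits b s)%:R * eta s.+1
     + (b k : nat)%:R * (nhits b k)%:R * eta k.+1).
Proof. by rewrite /stab_bound nhitsS !big_nat_recr. Qed.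

Lemma stab_bound_ge0 k : (k <= m)%N -> 0 <= bnd k.
Proof.
move=> km; rewrite addr_ge0 ?mulr_ge0 ?sqrtr_ge0 // big_nat sumr_ge0 // => s /andP[_ sk].
by rewrite !mulr_ge0 // eta_ge0 // (leq_trans sk).
Qed.

Lemma stab_bound_hit k : (k < m)%N -> b k -> bnd k + eta k.+1 <= bnd k.+1.
Proof.
move=> km bk; rewrite stab_boundS bk /= natrD mul1r.
set Q := \sum_(0 <= s < k) _; set N := (nhits b k)%:R; set B := \sum_(0 <= s < k) _.
have Q_ge0 : 0 <= Q by rewrite /Q big_nat sumr_ge0 // => s _; rewrite sqr_ge0.
have e_ge0 := eta_ge0 km; have N_ge0 : 0 <= N by exact: ler0n.
have sqrtQ_le : Num.sqrt Q <= Num.sqrt (Q + eta k.+1 ^+ 2).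
  by apply: ler_wsqrtr; rewrite lerDl sqr_ge0.
have eta_le : eta k.+1 <= Num.sqrt (Q + eta k.+1 ^+ 2).
  by rewrite -[leLHS]ger0_norm // -sqrtr_sqr ler_sqrt ?addr_ge0 ?sqr_ge0 // lerDr.
rewrite /stab_bound -/Q -/N -/B; nra.
Qed.

Lemma stab_bound_miss k : (k < m)%N -> ~~ b k -> (0 < nhits b k)%N ->
  bnd k ^+ 2 + eta k.+1 ^+ 2 <= bnd k.+1 ^+ 2.
Proof.
move=> km /negbTE bk N_gt0; rewrite stab_boundS bk /= addn0 mul0r mul0r addr0.
set Q := \sum_(0 <= s < k) _; set N := (nhits b k)%:R; set B := \sum_(0 <= s < k) _.
have Q_ge0 : 0 <= Q by rewrite /Q big_nat sumr_ge0 // => s _; rewrite sqr_ge0.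
have N_ge1 : 1 <= N by rewrite ler1n.
have B_ge0 : 0 <= B.
  rewrite /B big_nat sumr_ge0 // => s /andP[_ sk].
  by rewrite !mulr_ge0 // eta_ge0 // (ltn_trans sk).
have sqrtQ_le : Num.sqrt Q <= Num.sqrt (Q + eta k.+1 ^+ 2).
  by apply: ler_wsqrtr; rewrite lerDl sqr_ge0.
have sqrQ : Num.sqrt Q ^+ 2 = Q by rewrite sqr_sqrtr.
have sqrQ' : Num.sqrt (Q + eta k.+1 ^+ 2) ^+ 2 = Q + eta k.+1 ^+ 2.
  by rewrite sqr_sqrtr ?addr_ge0 ?sqr_ge0.
have eta2_le : eta k.+1 ^+ 2 <= eta k.+1 ^+ 2 * N ^+ 2.
  by rewrite ler_peMr ?sqr_ge0 // expr_ge1 //; lra.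
have QNB_le : Num.sqrt Q * N * B <= Num.sqrt (Q + eta k.+1 ^+ 2) * N * B.
  by rewrite ler_wpM2r // ler_wpM2r //; lra.
rewrite /stab_bound -/Q -/N -/B !sqrrD !exprMn sqrQ sqrQ' mulrDl; lra.
Qed.

Lemma stab_bound_le k k' : (k <= k' <= m)%N -> bnd k <= bnd k'.
Proof.
move=> /andP[kk' k'm]; elim: k' kk' k'm => [|k' IH]; first by rewrite leqn0 => /eqP ->.
rewrite leq_eqVlt => /predU1P[-> //| kk'] k'm.
apply: le_trans (IH kk' (ltnW k'm)) _.
have [bk|bk] := boolP (b k').
  by apply: le_trans (stab_bound_hit k'm bk); rewrite lerDl eta_ge0.
rewrite stab_boundS (negbTE bk) /= addn0 mul0r mul0r addr0 lerD2r ler_wpM2r //.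
by apply: ler_wsqrtr; rewrite lerDl sqr_ge0.
Qed.

End StabBound.

Section TwoTrajectories.
Variables (R : realType) (d : nat) (X : set 'rV[R]_d) (Z : Type) (L : R).
Variables (g : Z -> 'rV[R]_d -> 'rV[R]_d) (proj : 'rV[R]_d -> 'rV[R]_d).
Variables (eta : nat -> R) (m : nat) (z z' : 'I_m -> Z) (b : nat -> bool).
Variables (x x' : nat -> 'rV[R]_d).
Hypotheses (X_convex : convex_set X) (projP : is_proj X proj) (L_ge0 : 0 <= L).
Hypothesis g_monotone : forall w u v, X u -> X v -> 0 <= dotp (g w u - g w v) (u - v).
Hypothesis g_bounded : forall w u, X u -> enorm (g w u) <= L.
Hypotheses (Xx : forall k, X (x k)) (Xx' : forall k, X (x' k)) (x0 : x 0 = x' 0).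
Hypothesis x_step : forall k (km : (k < m)%N),
  x k.+1 = proj (x k - eta k.+1 *: g (z (Ordinal km)) (x k)).
Hypothesis x'_step : forall k (km : (k < m)%N),
  x' k.+1 = proj (x' k - eta k.+1 *: g (z' (Ordinal km)) (x' k)).
Hypothesis eta_ge0 : forall k, (k < m)%N -> 0 <= eta k.+1.
Hypothesis same_sample : forall k (km : (k < m)%N), ~~ b k -> z (Ordinal km) = z' (Ordinal km).

Lemma trajectories_eq k : (k <= m)%N -> nhits b k = 0%N -> x k = x' k.
Proof.
elim: k => // k IH km; rewrite nhitsS => /eqP; rewrite addn_eq0 eqb0 => /andP[/eqP N0 bk].
by rewrite (x_step km) (x'_step km) (IH (ltnW km) N0) same_sample.
Qed.

Let L2_ge0 : 0 <= 2 * L. Proof. by rewrite mulr_ge0. Qed.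

Let dist_bound_ge0 k : (k <= m)%N -> 0 <= 2 * L * stab_bound eta b k.
Proof. by move=> km; apply: mulr_ge0 L2_ge0 (stab_bound_ge0 b eta_ge0 km). Qed.

Lemma trajectories_dist k : (k <= m)%N -> enorm (x k - x' k) <= 2 * L * stab_bound eta b k.
Proof.
elim: k => [_|k IH km]; first by rewrite x0 subrr enorm0 dist_bound_ge0.
have IHk := IH (ltnW km); have e_ge0 := eta_ge0 km.
rewrite (x_step km) (x'_step km); apply: le_trans (proj_nonexpansive _ projP _ _) _ => //.
have [bk|bk] := boolP (b k).
  apply: le_trans (enorm_step_diff (L := L) _ _ _ _ e_ge0) _; rewrite ?g_bounded //.
  by have := ler_wpM2l L2_ge0 (stab_bound_hit eta_ge0 km bk); rewrite mulrDr; lra.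
have [N0|N_gt0] := posnP (nhits b k).
  by rewrite (trajectories_eq (ltnW km) N0) same_sample // subrr enorm0 dist_bound_ge0.
rewrite same_sample // -(ler_pXn2r (n := 2)) ?nnegrE ?enorm_ge0 ?dist_bound_ge0 //.
apply: le_trans (enorm_step_same (L := L) _ _ _ _) _; rewrite ?g_monotone ?g_bounded //.
have IH2 : enorm (x k - x' k) ^+ 2 <= (2 * L * stab_bound eta b k) ^+ 2.
  by rewrite ler_pXn2r ?nnegrE ?enorm_ge0 ?dist_bound_ge0 ?(ltnW km).
have := ler_wpM2l (sqr_ge0 (2 * L)) (stab_bound_miss eta_ge0 km bk N_gt0).
by rewrite !exprMn in IH2 *; lra.
Qed.

End TwoTrajectories.

Section Expectation.
Variables (R : realType) (n m : nat).
Implicit Types F G : {ffun 'I_m -> 'I_n} -> R.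
Local Notation E := (@expect_idx R n m).

Lemma expect_idx_sum (J : Type) (r : seq J) (P : pred J) (F : J -> {ffun 'I_m -> 'I_n} -> R) :
  E (fun I => \sum_(i <- r | P i) F i I) = \sum_(i <- r | P i) E (F i).
Proof. by rewrite /expect_idx exchange_big mulr_suml. Qed.

Lemma expect_idxD F G : E (fun I => F I + G I) = E F + E G.
Proof. by rewrite /expect_idx big_split mulrDl. Qed.

Lemma expect_idxMl (c : R) F : E (fun I => c * F I) = c * E F.
Proof. by rewrite /expect_idx -mulr_sumr mulrA. Qed.

Lemma ler_expect_idx F G : (forall I, F I <= G I) -> E F <= E G.
Proof. by move=> FG; rewrite ler_wpM2r ?invr_ge0 ?exprn_ge0 ?ler_sum. Qed.

Lemma expect_idx_cst (c : R) : (0 < n)%N -> E (fun=> c) = c.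
Proof.
move=> n_gt0; rewrite /expect_idx sumr_const card_ffun !card_ord -(mulr_natr c) natrX.
by rewrite mulfK // expf_neq0 // pnatr_eq0 -lt0n.
Qed.

Lemma expect_idx_prod (F : 'I_m -> 'I_n -> R) :
  E (fun I => \prod_k F k (I k)) = \prod_k ((\sum_v F k v) / n%:R).
Proof.
rewrite /expect_idx -bigA_distr_bigA [RHS]big_split /= prodr_const card_ord.
by rewrite exprVn.
Qed.

Lemma expect_idx_prod_eq (A : {set 'I_m}) (j : 'I_n) : (0 < n)%N ->
  E (fun I => \prod_(k in A) ((I k == j) : nat)%:R) = n%:R ^- #|A|.
Proof.
move=> n_gt0; have n_neq0 : n%:R != 0 :> R by rewrite pnatr_eq0 -lt0n.
under eq_fun do rewrite big_mkcond /=.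
rewrite (expect_idx_prod (fun k v => if k \in A then ((v == j) : nat)%:R else 1)).
rewrite -exprVn -prodr_const (big_mkcond (mem A)) /=.
apply: eq_bigr => k _; case: (k \in A).
  by rewrite (bigD1 j) //= eqxx big1 ?addr0 ?mul1r // => v /negbTE ->.
by rewrite sumr_const card_ord mulfV.
Qed.

End Expectation.

Definition hits_at (n m : nat) (I : {ffun 'I_m -> 'I_n}) (j : 'I_n) (s : nat) : bool :=
  if insub s is Some i then I i == j else false.

Lemma hits_atE n m (I : {ffun 'I_m -> 'I_n}) j s (sm : (s < m)%N) :
  hits_at I j s = (I (Ordinal sm) == j).
Proof. by rewrite /hits_at insubT. Qed.

Section ExpectedHits.
Variables (R : realType) (n m : nat) (j : 'I_n).
Hypothesis n_gt0 : (0 < n)%N.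
Local Notation E := (@expect_idx R n m).
Local Notation hit I s := ((hits_at I j s : nat)%:R : R).

Lemma expect_hit s : (s < m)%N -> E (fun I => hit I s) = n%:R^-1.
Proof.
move=> sm; rewrite -[n%:R in RHS]expr1 -(cards1 (Ordinal sm)) -(expect_idx_prod_eq _ _ j) //.
by congr expect_idx; apply/funext => I; rewrite big_set1 hits_atE.
Qed.

Lemma expect_hit2 r s : (r < s)%N -> (s < m)%N -> E (fun I => hit I r * hit I s) = (n%:R ^+ 2)^-1.
Proof.
move=> rs sm; have rm := ltn_trans rs sm.
have neq_rs : Ordinal rm != Ordinal sm by rewrite -(inj_eq val_inj) /= ltn_eqF.
have card2 : #|[set Ordinal rm; Ordinal sm]%SET| = 2%N by rewrite cards2 neq_rs.
rewrite -card2 -(expect_idx_prod_eq _ _ j) //.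
congr expect_idx; apply/funext => I.
by rewrite big_setU1 ?big_set1 ?hits_atE // inE.
Qed.

Lemma expect_nhits : E (fun I => (nhits (hits_at I j) m)%:R) = m%:R / n%:R.
Proof.
under eq_fun do rewrite natr_sum.
rewrite expect_idx_sum big_nat (eq_bigr (fun=> n%:R^-1)) => [|s /andP[_]]; last exact: expect_hit.
by rewrite -big_nat sumr_const_nat subn0 mulr_natl.
Qed.

Lemma expect_hit_nhits s : (s < m)%N ->
  E (fun I => hit I s * (nhits (hits_at I j) s)%:R) = s%:R / n%:R ^+ 2.
Proof.
move=> sm; under eq_fun do rewrite natr_sum mulr_sumr.
rewrite expect_idx_sum big_nat (eq_bigr (fun=> (n%:R ^+ 2)^-1)) => [|r /andP[_ rs]].
  by rewrite -big_nat sumr_const_nat subn0 mulr_natl.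
by under eq_fun do rewrite mulrC; exact: expect_hit2.
Qed.

Lemma expect_stab_bound_le (eta : nat -> R) : (forall s, (s < m)%N -> 0 <= eta s.+1) ->
  E (fun I => stab_bound eta (hits_at I j) m) <=
  m%:R / n%:R * (Num.sqrt (\sum_(0 <= s < m) eta s.+1 ^+ 2) + n%:R^-1 * \sum_(0 <= s < m) eta s.+1).
Proof.
move=> eta_ge0; rewrite /stab_bound expect_idxD [E _]expect_idxMl expect_nhits.
have -> : E (fun I => \sum_(0 <= s < m) hit I s * (nhits (hits_at I j) s)%:R * eta s.+1) =
    \sum_(0 <= s < m) s%:R / n%:R ^+ 2 * eta s.+1.
  rewrite expect_idx_sum; apply: eq_big_nat => s /andP[_ sm].
  by under eq_fun do rewrite mulrC; rewrite expect_idxMl expect_hit_nhits // mulrC.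
rewrite mulrDr (mulrC (Num.sqrt _)) lerD2l mulrA mulr_sumr; apply: ler_sum_nat => s /andP[_ sm].
rewrite ler_wpM2r ?eta_ge0 // expr2 invfM mulrA.
by rewrite !ler_wpM2r ?invr_ge0 // ler_nat ltnW.
Qed.

End ExpectedHits.

Section RSGD.
Variables (R : realType) (d : nat) (X : set 'rV[R]_d) (Z : Type) (f : 'rV[R]_d -> Z -> R).
Variables (L : R) (g : Z -> 'rV[R]_d -> 'rV[R]_d) (proj : 'rV[R]_d -> 'rV[R]_d).
Variables (n m : nat) (eta : nat -> R) (x1 : 'rV[R]_d).
Hypotheses (X_convex : convex_set X) (projP : is_proj X proj) (Xx1 : X x1).
Hypothesis g_subgrad : forall z x, X x -> is_subgrad X L (fun y => f y z) x (g z x).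
Hypothesis L_ge0 : 0 <= L.
Hypothesis eta_ge0 : forall k, (k <= m)%N -> 0 <= eta k.+1.
Let eta_ge0_lt k : (k < m)%N -> 0 <= eta k.+1. Proof. by move/ltnW/eta_ge0. Qed.
Let L2_ge0 : 0 <= 2 * L. Proof. by rewrite mulr_ge0. Qed.
Local Notation x S I := (@rsgd_x R d Z n m proj g S eta x1 I).

Lemma rsgd_xS S I k (km : (k < m)%N) :
  x S I k.+1 = proj (x S I k - eta k.+1 *: g (S (I (Ordinal km))) (x S I k)).
Proof. by rewrite /= insubT. Qed.

Lemma rsgd_x_in S I k : X (x S I k).
Proof. by elim: k => //= k IH; case: insubP => // i _ _; exact: (projP _).1. Qed.

Lemma rsgd_out_enorm_le (Rad : R) S (I : {ffun 'I_m -> 'I_n}) :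
  (forall y, X y -> enorm y <= Rad) -> enorm (@rsgd_out R d Z n m.+1 proj g S eta x1 I) <= Rad.
Proof.
move=> X_le; apply: enorm_avg_le.
- by move=> k; apply: eta_ge0; rewrite -ltnS.
- by move=> k; apply/X_le/rsgd_x_in.
- exact: le_trans (enorm_ge0 _) (X_le _ Xx1).
Qed.

Section Neighbors.
Variables (S S' : 'I_n -> Z) (j : 'I_n) (I : {ffun 'I_m -> 'I_n}).
Hypothesis SS' : forall i, i != j -> S i = S' i.

Lemma rsgd_x_dist k : (k <= m)%N ->
  enorm (x S I k - x S' I k) <= 2 * L * stab_bound eta (hits_at I j) m.
Proof.
move=> km; have km_m : (k <= m <= m)%N by rewrite km leqnn.
apply: le_trans (ler_wpM2l L2_ge0 (stab_bound_le _ eta_ge0_lt km_m)).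
apply: (trajectories_dist (g := g) (z := fun i => S (I i)) (z' := fun i => S' (I i))
  X_convex projP L_ge0) => //.
- by move=> w u v Xu Xv; exact: subgrad_monotone Xu Xv (g_subgrad w Xu) (g_subgrad w Xv).
- by move=> w u Xu; have [] := g_subgrad w Xu.
- exact: rsgd_x_in.
- exact: rsgd_x_in.
- exact: rsgd_xS.
- exact: rsgd_xS.
- by move=> k' k'm; rewrite hits_atE => /SS'.
Qed.

Lemma rsgd_out_dist :
  enorm (@rsgd_out R d Z n m.+1 proj g S eta x1 I - @rsgd_out R d Z n m.+1 proj g S' eta x1 I)
  <= 2 * L * stab_bound eta (hits_at I j) m.
Proof.
rewrite /rsgd_out -scalerBr -sumrB.
under [X in _ *: X]eq_bigr do rewrite -scalerBr.
apply: enorm_avg_le.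
- by move=> k; apply: eta_ge0; rewrite -ltnS.
- by move=> k; apply: rsgd_x_dist; rewrite -ltnS.
- exact: mulr_ge0 L2_ge0 (stab_bound_ge0 _ eta_ge0_lt (leqnn m)).
Qed.

End Neighbors.
End RSGD.

Unset Implicit Arguments.

Theorem theoremA1 (R : realType) (d : nat) (X : set 'rV[R]_d) (Rad : R)
  (Z : Type) (f : 'rV[R]_d -> Z -> R) (L : R)
  (g : Z -> 'rV[R]_d -> 'rV[R]_d) (proj : 'rV[R]_d -> 'rV[R]_d)
  (n T : nat) (eta : nat -> R) (x1 : 'rV[R]_d) (S S' : 'I_n -> Z) :
  compact X -> convex_set X -> (forall x, X x -> enorm x <= Rad) ->
  (forall z, convex_lip_class X L (fun x => f x z)) ->
  (forall z x, X x -> is_subgrad X L (fun y => f y z) x (g z x)) ->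
  is_proj X proj ->
  X x1 ->
  (1 <= T)%N -> (T <= n)%N ->
  (forall t, (1 <= t <= T)%N -> 0 < eta t) ->
  neighboring S S' ->
  expect_idx (fun I : {ffun 'I_T.-1 -> 'I_n} =>
      enorm (rsgd_out proj g S eta x1 I - rsgd_out proj g S' eta x1 I))
  <= Num.min (2 * Rad)
       (3 * L * ((T.-1)%:R / n%:R) *
         (Num.sqrt (\sum_(1 <= t < T) eta t ^+ 2) + n%:R^-1 * \sum_(1 <= t < T) eta t)).
Proof.
move=> _ X_convex X_bounded _ g_subgrad projP Xx1 + + + [j SS'].
case: T => // m _ mn eta_gt0 /=.
have n_gt0 : (0 < n)%N by exact: leq_trans mn.
have eta_ge0 k : (k <= m)%N -> 0 <= eta k.+1 by move=> km; rewrite ltW ?eta_gt0.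
have L_ge0 : 0 <= L := le_trans (enorm_ge0 _) (g_subgrad (S j) x1 Xx1).2.
rewrite le_min; apply/andP; split.
  rewrite -[leRHS](expect_idx_cst m _ n_gt0); apply: ler_expect_idx => I.
  apply: le_trans (enormB _ _) _.
  have := rsgd_out_enorm_le g projP Xx1 eta_ge0 S I X_bounded.
  by have := rsgd_out_enorm_le g projP Xx1 eta_ge0 S' I X_bounded; lra.
pose dist_le I := rsgd_out_dist X_convex projP Xx1 g_subgrad L_ge0 eta_ge0 I SS'.
apply: le_trans (ler_expect_idx dist_le) _.
rewrite expect_idxMl !big_add1 /= -[leRHS]mulrA.
apply: le_trans (ler_wpM2l _ (expect_stab_bound_le _ n_gt0 (fun s sm => eta_ge0 s (ltnW sm)))) _.
  by rewrite mulr_ge0.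
have eta_sum_ge0 : 0 <= \sum_(0 <= s < m) eta s.+1.
  by rewrite big_nat sumr_ge0 // => s /andP[_ /ltnW/eta_ge0].
apply: ler_wpM2r; last lra.
by rewrite !mulr_ge0 ?addr_ge0 ?mulr_ge0 ?invr_ge0 ?ler0n ?sqrtr_ge0.
Qed.
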